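(* For every $k\in\omega$ and $\xi<\omega_1$, the sets $\mathcal{D}(k)=\{p\in\mathbb{P}: n^p\ge k\text{ and }k\in s^p\}$ and $\mathcal{E}(\xi)=\{p\in\mathbb{P}:\xi\in v^p\}$ are dense in the forcing notion $\mathbb{P}$ defined below.
   Context: For $n\in\omega$, $2^n$ is the set of $0$-$1$ sequences of length $n$, with metric $d(\eta,\eta')=2^{-k}$ for $\eta\ne\eta'$, where $k$ is least with $\eta\restriction k\neq\eta'\restriction k$. Let $\mathbb{L}_1(n)$ be the set of all $1$-Lipschitz functions $g\colon 2^n\to 2^n$. For a set $A$, $[A]^2$ denotes the set of $2$-element subsets of $A$, and $[A]^{<\omega}$ the finite subsets; $\rho(\alpha,\beta)$ means $\rho(\{\alpha,\beta\})$. A condition $p\in\mathbb{P}$ is a tuple $p=(n^p,s^p,v^p,\mathcal{F}^p,\gamma^p,\rho^p)$ such that: (1) $n^p\in\omega$, $s^p\in[\omega]^{<\omega}$, $v^p\in[\omega_1]^{<\omega}$; (2) $\mathcal{F}^p=\{f^p_i: i\in s^p\}\subseteq\mathbb{L}_1(n^p)$ and $\rho^p\colon[v^p]^2\to s^p$; (2') $\rho^p(\alpha,\beta)\neq\rho^p(\alpha',\beta)$ whenever $\alpha<\alpha'<\beta$; (3) $\gamma^p\colon v^p\to 2^{n^p}$ is one-to-one; (4) $\gamma^p(\alpha)=f^p_{\rho^p(\alpha,\beta)}(\gamma^p(\beta))$ whenever $\alpha<\beta$ are in $v^p$. The order: $p\le q$ ($q$ is stronger) iff (5) $n^p\le n^q$,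 $s^p\subseteq s^q$, $v^p\subseteq v^q$; (6) $f^q_i(\eta)\restriction n^p=f^p_i(\eta\restriction n^p)$ for each $i\in s^p$ and every $\eta\in 2^{n^q}$; (7) $\gamma^q(\alpha)\restriction n^p=\gamma^p(\alpha)$ for every $\alpha\in v^p$; (8) $\rho^q\restriction[v^p]^2=\rho^p$. A set $D\subseteq\mathbb{P}$ is dense if for every $p\in\mathbb{P}$ there is $q\in D$ with $p\le q$. *)

From HB Require Import structures.
From mathcomp Require Import all_boot all_order all_algebra.
From mathcomp Require Import finmap.
Set Implicit Arguments. Unset Strict Implicit. Unset Printing Implicit Defensive.
Import Order.TTheory GRing.Theory Num.Theory.
Local Open Scope fset_scope.
Local Open Scope order_scope.

Definition seq2 (n : nat) := n.-tuple bool.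

(* eta |` m : restriction to the first m coordinates (used only for m <= n) *)
Definition restr (n m : nat) (x : seq2 n) : seq2 m :=
  [tuple nth false x i | i < m].

Definition first_diff (n : nat) (x y : seq2 n) : nat :=
  find (fun k => take k x != take k y) (iota 0 n.+1).

Definition dist2 (n : nat) (x y : seq2 n) : rat :=
  if x == y then 0%R else (((2%:R : rat) ^+ first_diff x y)^-1)%R.

Definition lip1 (n : nat) (g : seq2 n -> seq2 n) : Prop :=
  forall x y : seq2 n, (dist2 (g x) (g y) <= dist2 x y)%R.

(* A (pre)condition; f i is relevant only for i in s, gam only on v,
   rho a b only for a < b in v  (rho a b stands for rho({a,b})). *)
Record pcond (d : Order.disp_t) (T : orderType d) := PCond {
  cn : nat;
  cs : {fset nat};
  cv : {fset T};
  cf : nat -> seq2 cn -> seq2 cn;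
  cgam : T -> seq2 cn;
  crho : T -> T -> nat }.
Arguments cf {d T} p _ _.
Arguments cgam {d T} p _.
Arguments crho {d T} p _ _.

Section Forcing.
Context {d : Order.disp_t} {T : orderType d}.

Definition is_cond (p : pcond T) : Prop :=
  (forall i, i \in cs p -> lip1 (cf p i)) /\
  (forall a b, a \in cv p -> b \in cv p -> a < b -> crho p a b \in cs p) /\
  (* (2') *)
  (forall a a' b, a \in cv p -> a' \in cv p -> b \in cv p ->
     a < a' -> a' < b -> crho p a b <> crho p a' b) /\
  (forall a b, a \in cv p -> b \in cv p -> cgam p a = cgam p b -> a = b) /\
  (* (4) *)
  (forall a b, a \in cv p -> b \in cv p -> a < b ->
     cgam p a = cf p (crho p a b) (cgam p b)).

(* p <= q : q is stronger *)
Definition cle (p q : pcond T) : Prop :=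
  (cn p <= cn q)%N /\ cs p `<=` cs q /\ cv p `<=` cv q /\
  (forall i, i \in cs p -> forall eta : seq2 (cn q),
     restr (cn p) (cf q i eta) = cf p i (restr (cn p) eta)) /\
  (forall a, a \in cv p -> restr (cn p) (cgam q a) = cgam p a) /\
  (forall a b, a \in cv p -> b \in cv p -> a < b -> crho q a b = crho p a b).

Definition dense (D : pcond T -> Prop) : Prop :=
  forall p, is_cond p -> exists2 q, is_cond q & cle p q /\ D q.

Definition Dk (k : nat) (p : pcond T) : Prop := (k <= cn p)%N /\ k \in cs p.
Definition Exi (xi : T) (p : pcond T) : Prop := xi \in cv p.

End Forcing.

Definition omega1_like (d : Order.disp_t) (T : orderType d) : Prop :=
  well_founded (fun x y : T => (x < y)%O) /\
  ~ (exists f : T -> nat, injective f) /\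
  (forall x : T, exists f : T -> nat, {in [pred y | (y < x)%O], injective f}).

(* Both families of sets are dense for an arbitrary linearly ordered index
   set.
   A 1-Lipschitz map of 2^n is exactly one that preserves agreement on initial
   segments, so padding every sequence of a condition with a final bit, and
   every map f_i with "restrict, apply f_i, pad", yields a stronger condition.
   For D(k) one pads up to length n + k and adds the index k with the identity
   map.  For E(xi) one pads by one bit, lets gamma(xi) be the all-ones sequence
   (distinct from every padded gamma(a)), and colours each new pair {a, xi} by
   a fresh index whose map is the constant required by (4); fresh colours keep
   (2') true. *)
From mathcomp Require Import all_boot all_order all_algebra.
From mathcomp Require Import finmap.
From mathcomp Require Import zify.
Import Order.TTheory GRing.Theory Num.Theory.
Set Implicit Arguments. Unset Strict Implicit.

Definition agree_upto (n j : nat) (x y : seq2 n) : Prop :=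
  forall i, (i < j)%N -> nth false x i = nth false y i.

Definition prefix_preserving (n : nat) (g : seq2 n -> seq2 n) : Prop :=
  forall j x y, agree_upto j x y -> agree_upto j (g x) (g y).

Section Prefixes.
Variable n : nat.
Implicit Types x y : seq2 n.

Lemma take_agreeP j x y : take j x = take j y <-> agree_upto j x y.
Proof.
split=> [E i lt_ij | A].
  have [lt_in | le_ni] := ltnP i n; last by rewrite !nth_default ?size_tuple.
  by have := congr1 (nth false ^~ i) E; rewrite !nth_take.
apply: (@eq_from_nth _ false); first by rewrite !size_take !size_tuple.
move=> i; rewrite size_take size_tuple => lt_i.
by rewrite !nth_take ?A //; move: lt_i; case: ifP; lia.
Qed.

Lemma agree_uptoW i j x y : (i <= j)%N -> agree_upto j x y -> agree_upto i x y.
Proof. by move=> le_ij A k lt_ki; apply: A; lia. Qed.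

Lemma agree_upto_first_diff i x y : (i < first_diff x y)%N -> agree_upto i x y.
Proof.
move=> lt_i; apply/take_agreeP.
have le_n : (i < n.+1)%N.
  apply: leq_trans lt_i _.
  by rewrite /first_diff -[X in (_ <= X)%N](size_iota 0 n.+1) find_size.
by have := before_find 0 lt_i; rewrite nth_iota // add0n => /negbFE/eqP.
Qed.

Lemma first_diff_disagree x y : x <> y -> ~ agree_upto (first_diff x y) x y.
Proof.
move=> neq_xy /take_agreeP.
have diff_n : has (fun k => take k x != take k y) (iota 0 n.+1).
  apply/hasP; exists n; first by rewrite mem_iota; lia.
  by rewrite !take_oversize ?size_tuple //; apply/eqP => /val_inj.
have := nth_find 0 diff_n; rewrite /first_diff nth_iota ?add0n.
  by move/eqP.
by move: diff_n; rewrite has_find size_iota.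
Qed.

Lemma ler_inv_pow2 (a b : nat) :
  (((2%:R : rat) ^+ a)^-1 <= ((2%:R : rat) ^+ b)^-1)%R = (b <= a)%N.
Proof. by rewrite lef_pV2 ?posrE ?exprn_gt0 // ler_eXn2l. Qed.

Lemma lip1_prefix_preserving (g : seq2 n -> seq2 n) :
  lip1 g <-> prefix_preserving g.
Proof.
split=> [lip_g j x y A i lt_ij | pres_g x y].
  apply/eqP/negPn/negP => neq_i.
  have neq_g : g x <> g y by move=> E; move: neq_i; rewrite E eqxx.
  have neq_xy : x <> y by move=> E; apply: neq_g; rewrite E.
  have lt_j : (j < first_diff x y)%N.
    rewrite ltnNge; apply/negP => le_j.
    exact/(first_diff_disagree neq_xy)/(agree_uptoW le_j).
  have le_g : (first_diff (g x) (g y) <= i.+1)%N.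
    rewrite leqNgt; apply/negP => /agree_upto_first_diff/(_ i (ltnSn i)) E.
    by move: neq_i; rewrite E eqxx.
  have := lip_g x y; rewrite /dist2 (introF eqP neq_xy) (introF eqP neq_g).
  rewrite ler_inv_pow2; lia.
rewrite /dist2; have [->|neq_xy] := eqVneq x y; first by rewrite eqxx.
have [_|/eqP neq_g] := eqVneq (g x) (g y); first by rewrite invr_ge0 exprn_ge0.
rewrite ler_inv_pow2 leqNgt; apply/negP => lt_g.
exact/(first_diff_disagree neq_g)/pres_g/agree_upto_first_diff.
Qed.

Lemma lip1_id : lip1 (fun x : seq2 n => x).
Proof. by apply/lip1_prefix_preserving. Qed.

Lemma lip1_const (c : seq2 n) : lip1 (fun _ => c).
Proof. by apply/lip1_prefix_preserving. Qed.

End Prefixes.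

Lemma nth_restr n m (x : seq2 n) i :
  nth false (restr m x) i = if (i < m)%N then nth false x i else false.
Proof.
have [lt_im | le_mi] := ltnP i m; last by rewrite nth_default ?size_tuple.
by rewrite /restr (nth_map (Ordinal lt_im)) ?size_enum_ord // nth_enum_ord.
Qed.

Lemma restr_restr n m k (x : seq2 n) : (k <= m)%N ->
  restr k (restr m x) = restr k x.
Proof.
move=> le_km; apply: val_inj; apply: (@eq_from_nth _ false).
  by rewrite !size_tuple.
move=> i; rewrite size_tuple => lt_ik; rewrite !nth_restr lt_ik.
by have -> : (i < m)%N by lia.
Qed.

Lemma restr_id n (x : seq2 n) : restr n x = x.
Proof.
apply: val_inj; apply: (@eq_from_nth _ false); first by rewrite !size_tuple.
by move=> i; rewrite size_tuple => lt_in; rewrite nth_restr lt_in.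
Qed.

Lemma restrK n N : (n <= N)%N -> cancel (@restr n N) (@restr N n).
Proof. by move=> le_nN x; rewrite restr_restr // restr_id. Qed.

Lemma restr_neq_ones n (x : seq2 n) : restr n.+1 x <> nseq_tuple n.+1 true.
Proof.
move=> /(congr1 (fun t : seq2 n.+1 => nth false t n)).
by rewrite nth_restr ltnSn nth_default ?size_tuple // nth_nseq ltnSn.
Qed.

Lemma agree_upto_restr n m j (x y : seq2 n) :
  agree_upto j x y -> agree_upto j (restr m x) (restr m y).
Proof. by move=> A i lt_ij; rewrite !nth_restr A. Qed.

Lemma lip1_pad n N (f : seq2 n -> seq2 n) :
  lip1 f -> lip1 (fun eta : seq2 N => restr N (f (restr n eta))).
Proof.
move=> /lip1_prefix_preserving pres_f; apply/lip1_prefix_preserving => j x y A.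
exact/agree_upto_restr/pres_f/agree_upto_restr.
Qed.
Local Open Scope order_scope.
Local Open Scope fset_scope.

Section Forcing.
Context {d : Order.disp_t} {T : orderType d}.
Implicit Types p q r : pcond T.

Lemma cle_refl p : cle p p.
Proof.
do 3!split=> //; split=> [i _ eta|]; first by rewrite !restr_id.
by split=> // a _; rewrite restr_id.
Qed.

Lemma cle_trans p q r : cle p q -> cle q r -> cle p r.
Proof.
move=> [le_n [sub_s [sub_v [ext_f [ext_g ext_r]]]]].
move=> [le_n' [sub_s' [sub_v' [ext_f' [ext_g' ext_r']]]]].
have le_pr : (cn p <= cn r)%N by apply: leq_trans le_n'.
have in_s i : i \in cs p -> i \in cs q by apply: (fsubsetP sub_s).
have in_v a : a \in cv p -> a \in cv q by apply: (fsubsetP sub_v).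
split=> //; split; first exact: fsubset_trans sub_s'.
split; first exact: fsubset_trans sub_v'.
split=> [i s_i eta|].
  by rewrite -(restr_restr _ le_n) ext_f' ?in_s // ext_f // restr_restr.
split=> [a v_a|a b v_a v_b lt_ab].
  by rewrite -(restr_restr _ le_n) ext_g' ?in_v // ext_g.
by rewrite ext_r' ?in_v // ext_r.
Qed.

Definition with_support p (s : {fset nat}) : pcond T :=
  @PCond d T (cn p) s (cv p) (cf p) (cgam p) (crho p).

Lemma with_support_cond p s : is_cond p -> cs p `<=` s ->
  (forall i, i \in s -> lip1 (cf p i)) -> is_cond (with_support p s).
Proof.
move=> [_ [in_s cond]] sub_s lip_s; split=> //; split=> // a b v_a v_b lt_ab.
exact/(fsubsetP sub_s)/in_s.
Qed.

Lemma with_support_ext p s : cs p `<=` s -> cle p (with_support p s).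
Proof. by move=> sub_s; have [le_n [_ rest]] := cle_refl p. Qed.

(* Outside the support the maps are irrelevant; the identity keeps them
   1-Lipschitz, so that the support can later be enlarged. *)
Definition pad p (N : nat) : pcond T :=
  @PCond d T N (cs p) (cv p)
    (fun i => if i \in cs p then fun eta => restr N (cf p i (restr (cn p) eta))
              else id)
    (fun a => restr N (cgam p a)) (crho p).

Section Pad.
Variables (p : pcond T) (N : nat).
Hypothesis le_nN : (cn p <= N)%N.

Lemma lip1_cf_pad i : is_cond p -> lip1 (cf (pad p N) i).
Proof.
move=> [lip_f _] /=; case: ifP => [/lip_f/lip1_pad// | _]; exact: lip1_id.
Qed.

Lemma pad_cond : is_cond p -> is_cond (pad p N).
Proof.
move=> cond_p; have [_ [in_s [neq_rho [inj_g coh]]]] := cond_p.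
split=> [i _|]; first exact: lip1_cf_pad.
do 2!split=> //; split=> [a b v_a v_b /(congr1 (restr (cn p)))|a b v_a v_b lt_ab /=].
  by rewrite !restrK //; apply: inj_g.
by rewrite in_s // restrK // -coh.
Qed.

Lemma pad_ext : cle p (pad p N).
Proof.
do 3!split=> //; split=> [i s_i eta /=|]; first by rewrite s_i restrK.
by split=> // a _ /=; rewrite restrK.
Qed.

End Pad.

(* Each new pair {a, xi} gets its own fresh colour, beyond the support and
   decoded back to a through the enumeration of v; its map is the constant
   that (4) demands. *)
Section AddPoint.
Variables (p : pcond T) (xi : T) (c : seq2 (cn p)).

Let M := (\max_(i <- enum_fset (cs p)) i).+1.
Let fresh (a : T) := (M + index a (enum_fset (cv p)))%N.
Let gam (a : T) := if a == xi then c else cgam p a.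

Definition add_point : pcond T :=
  @PCond d T (cn p) (cs p `|` [fset fresh a | a in cv p]) (xi |` cv p)
    (fun j => if j \in cs p then cf p j
              else let a := nth xi (enum_fset (cv p)) (j - M) in
                   fun _ => if a < xi then gam a else c)
    gam
    (fun a b => if b == xi then fresh a else if a == xi then fresh b
                else crho p a b).

Lemma fresh_notin a : fresh a \notin cs p.
Proof.
apply/negP => s_a; suff : (fresh a < M)%N by rewrite ltnNge leq_addr.
by rewrite ltnS (leq_bigmax_seq (F := id) _ s_a).
Qed.

Lemma nth_fresh a : a \in cv p -> nth xi (enum_fset (cv p)) (fresh a - M) = a.
Proof. by move=> v_a; rewrite addKn nth_index. Qed.

Lemma fresh_inj a b : a \in cv p -> b \in cv p -> fresh a = fresh b -> a = b.
Proof. by move=> v_a v_b E; rewrite -(nth_fresh v_a) -(nth_fresh v_b) E. Qed.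

Hypothesis xi_notin : xi \notin cv p.

Lemma neq_xi a : a \in cv p -> a != xi.
Proof. by apply: contraTneq => ->. Qed.

Lemma gam_old a : a \in cv p -> gam a = cgam p a.
Proof. by move/neq_xi/negbTE; rewrite /gam => ->. Qed.

Lemma add_point_ext : cle p add_point.
Proof.
split=> //; split; first exact: fsubsetUl.
split; first exact: fsubsetU1.
split=> [i s_i eta /=|]; first by rewrite s_i !restr_id.
split=> [a v_a /=|a b v_a v_b _ /=]; first by rewrite restr_id gam_old.
by rewrite !(negbTE (neq_xi _)).
Qed.

Hypothesis cond_p : is_cond p.

Lemma rho_neq_fresh a b : a \in cv p -> b \in cv p -> a < b -> crho p a b != fresh b.
Proof.
have [_ [in_s _]] := cond_p.
by move=> v_a v_b lt_ab; apply: contraTneq (fresh_notin b) => <-; rewrite negbK in_s.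
Qed.

Lemma add_point_rho_mem a b : a \in cv add_point -> b \in cv add_point ->
  a < b -> crho add_point a b \in cs add_point.
Proof.
have [_ [in_s _]] := cond_p.
have s_fresh e : e \in cv p -> fresh e \in cs add_point.
  by move=> v_e; rewrite in_fsetU in_imfset ?orbT.
move=> /fset1UP[->|v_a] /fset1UP[->|v_b] lt_ab /=.
- by rewrite ltxx in lt_ab.
- by rewrite (negbTE (neq_xi v_b)) eqxx s_fresh.
- by rewrite eqxx s_fresh.
- by rewrite !(negbTE (neq_xi _)) // in_fsetU in_s.
Qed.

Lemma add_point_rho_neq a a' b :
  a \in cv add_point -> a' \in cv add_point -> b \in cv add_point ->
  a < a' -> a' < b -> crho add_point a b <> crho add_point a' b.
Proof.
have [_ [_ [neq_rho _]]] := cond_p.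
move=> /fset1UP[->|v_a] /fset1UP[->|v_a'] /fset1UP[->|v_b] lt_aa' lt_a'b /=.
- by rewrite ltxx in lt_aa'.
- by rewrite ltxx in lt_aa'.
- by have := lt_trans lt_aa' lt_a'b; rewrite ltxx.
- rewrite eqxx !(negbTE (neq_xi _)) // => E.
  by move: (rho_neq_fresh v_a' v_b lt_a'b); rewrite E eqxx.
- by rewrite ltxx in lt_a'b.
- rewrite eqxx !(negbTE (neq_xi _)) // => E.
  by move: (rho_neq_fresh v_a v_b (lt_trans lt_aa' lt_a'b)); rewrite E eqxx.
- by rewrite eqxx => /(fresh_inj v_a v_a') E; rewrite E ltxx in lt_aa'.
- by rewrite !(negbTE (neq_xi _)) //; apply: neq_rho.
Qed.

Lemma add_point_coherent a b : a \in cv add_point -> b \in cv add_point -> a < b ->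
  cgam add_point a = cf add_point (crho add_point a b) (cgam add_point b).
Proof.
have [_ [in_s [_ [_ coh]]]] := cond_p.
move=> /fset1UP[->|v_a] /fset1UP[->|v_b] lt_ab /=.
- by rewrite ltxx in lt_ab.
- rewrite eqxx (negbTE (neq_xi v_b)) (negbTE (fresh_notin b)) nth_fresh //.
  by rewrite lt_gtF // /gam eqxx.
- by rewrite eqxx (negbTE (fresh_notin a)) nth_fresh // lt_ab.
rewrite (negbTE (neq_xi v_a)) (negbTE (neq_xi v_b)) in_s // !gam_old //.
exact: coh.
Qed.

Hypothesis c_new : forall a, a \in cv p -> cgam p a <> c.

Lemma add_point_gam_inj a b : a \in cv add_point -> b \in cv add_point ->
  cgam add_point a = cgam add_point b -> a = b.
Proof.
have [_ [_ [_ [inj_g _]]]] := cond_p.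
move=> /fset1UP[->|v_a] /fset1UP[->|v_b] /=.
- by [].
- by rewrite /gam eqxx (negbTE (neq_xi v_b)) => /esym/c_new.
- by rewrite /gam eqxx (negbTE (neq_xi v_a)) => /c_new.
- by rewrite !gam_old // => /inj_g; apply.
Qed.

Lemma add_point_cond : is_cond add_point.
Proof.
have [lip_f _] := cond_p.
split=> [i _ /=|]; first by case: ifP => [/lip_f|_]; [|exact: lip1_const].
split; first exact: add_point_rho_mem.
split; first exact: add_point_rho_neq.
split; [exact: add_point_gam_inj | exact: add_point_coherent].
Qed.

End AddPoint.

Lemma Dk_dense k : dense (@Dk d T k).
Proof.
move=> p cond_p; set q := pad p (cn p + k).
have le_n : (cn p <= cn p + k)%N by apply: leq_addr.
exists (with_support q (k |` cs p)).
  apply: with_support_cond; [exact: pad_cond | exact: fsubsetU1 |].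
  by move=> i _; apply: lip1_cf_pad.
split; last by rewrite /Dk /= leq_addl fset1U1.
by apply: cle_trans (pad_ext le_n) _; apply: with_support_ext; apply: fsubsetU1.
Qed.

Lemma Exi_dense xi : dense (@Exi d T xi).
Proof.
move=> p cond_p; have [v_xi | xi_notin] := boolP (xi \in cv p).
  by exists p; last split; [|exact: cle_refl|].
set q := pad p (cn p).+1; have le_n : (cn p <= (cn p).+1)%N by [].
exists (@add_point q xi (nseq_tuple _ true)).
  apply: add_point_cond => //; first exact: pad_cond.
  by move=> a _; apply: restr_neq_ones.
split; last exact: fset1U1.
apply: cle_trans (pad_ext le_n) _; exact: add_point_ext.
Qed.

End Forcing.

Theorem lemma3p3 (d : Order.disp_t) (T : orderType d) (HT : omega1_like T) :
  (forall k : nat, dense (@Dk d T k)) /\ (forall xi : T, dense (@Exi d T xi)).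
Proof. by split=> [k | xi]; [exact: Dk_dense | exact: Exi_dense]. Qed.
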